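(* Let $\Phi\subset\mathbb{C}$ be a symbol constellation with at least two distinct points, let $\sigma^2>0$, and let $M\geq 2$ be a power of $2$. Consider the AVC corresponding to securely precoded OFDM (SP-OFDM), with input alphabet $\Phi$, state (jamming) alphabet $\mathbb{C}$ and output $R = S + e^{j\Theta}J + N$, where $\Theta$ is uniformly distributed on $\{2\pi i/M : i=0,1,\dots,M-1\}$, $N\sim\mathcal{CN}(0,\sigma^2)$, and $\Theta$, $N$ are independent of each other and of $(S,J)$; i.e. its transition density is $W(r\mid s,x)=\frac{1}{M}\sum_{i=0}^{M-1}\frac{1}{\pi\sigma^2}\exp\!\big(-|r-s-x e^{j2\pi i/M}|^2/\sigma^2\big)$. Then there is no auxiliary channel $\pi:\Phi\to\mathbb{C}$ that symmetrizes this AVC (the set of symmetrizing channels is empty); in particular the AVC is not $l$-symmetrizable.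
   Context: Definitions (Csiszár–Narayan). Let $W(r\mid s,x)$ be the conditional density of the channel output $R\in\mathbb{C}$ given input $s\in\Phi$ and state $x\in\mathbb{C}$. An auxiliary channel $\pi:\Phi\to\mathbb{C}$ is a family of probability measures $F_\pi(\cdot\mid s)$ on $\mathbb{C}$, $s\in\Phi$. The AVC is symmetrizable via $\pi$ if for all $s,s'\in\Phi$ and all $r\in\mathbb{C}$, $\int_{\mathbb{C}} W(r\mid s,x)\,dF_\pi(x\mid s')=\int_{\mathbb{C}} W(r\mid s',x)\,dF_\pi(x\mid s)$. The AVC is $l$-symmetrizable (under an average jamming power constraint) if there is such a symmetrizing $\pi$ with $\int_{\mathbb{C}}|x|^2\,dF_\pi(x\mid s)<\infty$ for all $s\in\Phi$. *)

(* The complex plane C is modelled as R * R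
   (real part, imaginary part) with its product (= Borel) sigma-algebra. *)
From HB Require Import structures.
From mathcomp Require Import all_boot all_order all_algebra.
From mathcomp Require Import all_classical all_reals all_analysis.
Set Implicit Arguments. Unset Strict Implicit. Unset Printing Implicit Defensive.
Import Order.TTheory GRing.Theory Num.Theory.
Local Open Scope ring_scope.

Section Defs.
Variable R : realType.

Definition cplx := (R * R)%type.
Definition csub (z w : cplx) : cplx := (z.1 - w.1, z.2 - w.2).
Definition cmul (z w : cplx) : cplx :=
  (z.1 * w.1 - z.2 * w.2, z.1 * w.2 + z.2 * w.1).
Definition cexpi (t : R) : cplx := (cos t, sin t).
Definition cabs2 (z : cplx) : R := z.1 ^+ 2 + z.2 ^+ 2.

Definition W_SP (sigma2 : R) (M : nat) (r s x : cplx) : R :=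
  M%:R^-1 * \sum_(i < M)
    ((pi * sigma2)^-1 *
      expR (- cabs2 (csub (csub r s) (cmul x (cexpi (2 * pi * i%:R / M%:R)))) / sigma2)).

Definition symmetrizes (Phi : set cplx) (W : cplx -> cplx -> cplx -> R)
  (F : cplx -> probability cplx R) : Prop :=
  forall s s', Phi s -> Phi s' -> forall r : cplx,
    (\int[F s']_x (W r s x)%:E = \int[F s]_x (W r s' x)%:E)%E.

Definition symmetrizable Phi W : Prop := exists F, symmetrizes Phi W F.

Definition l_symmetrizable Phi W : Prop :=
  exists F, symmetrizes Phi W F /\
    forall s, Phi s -> (\int[F s]_x (cabs2 x)%:E < +oo)%E.
End Defs.

From HB Require Import structures.
From mathcomp Require Import all_boot all_order all_algebra.
From mathcomp Require Import all_classical all_reals all_analysis.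
From mathcomp Require Import ring lra.
Import measurable_realfun.
Set Implicit Arguments.
Unset Strict Implicit.
Unset Printing Implicit Defensive.
Import Order.TTheory GRing.Theory Num.Theory.
Local Open Scope classical_set_scope.
Local Open Scope ring_scope.

(* For a jammer distribution P let G_P(u) = \int W(u | 0, x) dP(x); since
   W(r | s, x) depends only on r - s, both sides of the symmetrizability
   condition are values of such functions.
   Since the phase is uniform over the M-th roots of unity, G_P(rho u) = G_P(u)
   for rho = e^{2 pi j/M}.  A symmetrizing channel F gives
   G_{F s1}(u) = G_{F s0}(u + s0 - s1), and together with the rotation invariance
   of both sides this makes G_{F s1} periodic with period (rho - 1)(s0 - s1),
   which is nonzero as M >= 2.  By dominated convergence G_{F s1} vanishes at
   infinity, hence G_{F s1}(0) = 0, whereas it is the integral of a positive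
   function. *)

Lemma big_ord_shift (V : nmodType) n (f : nat -> V) :
  f n = f 0%N -> \sum_(i < n) f i.+1 = \sum_(i < n) f i.
Proof.
case: n => [|n] fn0; first by rewrite !big_ord0.
by rewrite big_ord_recr big_ord_recl fn0 addrC.
Qed.

Section ComplexPairs.
Context {R : realType}.
Implicit Types (z w u v : cplx R) (s t : R).

Definition cone : cplx R := (1, 0).

Lemma csubE z w : csub z w = z - w. Proof. by []. Qed.

Lemma cmulA z w u : cmul z (cmul w u) = cmul (cmul z w) u.
Proof. by apply: injective_projections; rewrite /cmul /=; ring. Qed.

Lemma cmul1 z : cmul cone z = z.
Proof. by apply: injective_projections; rewrite /cmul /cone /=; ring. Qed.

Lemma cmulDr z u v : cmul z (u + v) = cmul z u + cmul z v.
Proof. by apply: injective_projections; rewrite /cmul /=; ring. Qed.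

Lemma cmulBl z w u : cmul (z - w) u = cmul z u - cmul w u.
Proof. by apply: injective_projections; rewrite /cmul /=; ring. Qed.

Lemma cmulBr z u v : cmul z (u - v) = cmul z u - cmul z v.
Proof. by apply: injective_projections; rewrite /cmul /=; ring. Qed.

Lemma cmulCA z w u : cmul z (cmul w u) = cmul w (cmul z u).
Proof. by apply: injective_projections; rewrite /cmul /=; ring. Qed.

Lemma cabs2_ge0 z : 0 <= cabs2 z.
Proof. by rewrite /cabs2 addr_ge0 // sqr_ge0. Qed.

Lemma cabs2_eq0 z : (cabs2 z == 0) = (z == 0).
Proof.
case: z => a b; rewrite /cabs2 paddr_eq0 ?sqr_ge0 // !sqrf_eq0.
by rewrite xpair_eqE.
Qed.

Lemma cabs2_cmul z w : cabs2 (cmul z w) = cabs2 z * cabs2 w.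
Proof. by rewrite /cabs2 /cmul /=; ring. Qed.

Lemma scale_pairE t z : t *: z = (t * z.1, t * z.2).
Proof. by []. Qed.

Lemma cabs2_scale t z : cabs2 (t *: z) = t ^+ 2 * cabs2 z.
Proof. by rewrite scale_pairE /cabs2 /=; ring. Qed.

Lemma cabs2_cexpi t : cabs2 (cexpi t) = 1.
Proof. by rewrite /cabs2 /= cos2Dsin2. Qed.

Lemma cmul_neq0 z w : z != 0 -> w != 0 -> cmul z w != 0.
Proof. by rewrite -!cabs2_eq0 cabs2_cmul; exact: mulf_neq0. Qed.

Lemma cabs2_subr_ge z w : cabs2 z / 2 - cabs2 w <= cabs2 (z - w).
Proof.
rewrite /cabs2 /=.
have := sqr_ge0 (z.1 - 2 * w.1); have := sqr_ge0 (z.2 - 2 * w.2); nra.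
Qed.

Lemma cexpiD s t : cexpi (s + t) = cmul (cexpi s) (cexpi t).
Proof. by rewrite /cexpi /cmul cosD sinD /=; congr pair; ring. Qed.

End ComplexPairs.

Section RootsOfUnity.
Variable R : realType.

Definition cunit_root (M n : nat) : cplx R := cexpi (2 * pi * n%:R / M%:R).

Lemma cunit_root0 M : cunit_root M 0 = cone.
Proof. by rewrite /cunit_root /cexpi mulr0 mul0r cos0 sin0. Qed.

Lemma cunit_rootS M n :
  cunit_root M n.+1 = cmul (cunit_root M 1) (cunit_root M n).
Proof. by rewrite /cunit_root -cexpiD -natr1; congr cexpi; ring. Qed.

Lemma cunit_rootnn M : (0 < M)%N -> cunit_root M M = cone.
Proof.
move=> M_gt0; rewrite /cunit_root /cexpi mulfK ?pnatr_eq0 -?lt0n //.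
by rewrite mulr_natl cos2pi sin2pi.
Qed.

Lemma cunit_root1_neq1 M : (2 <= M)%N -> cunit_root M 1 != cone.
Proof.
move=> M_ge2; have M_gt0 : 0 < M%:R :> R by rewrite ltr0n (leq_trans _ M_ge2).
rewrite /cunit_root /cexpi /cone mulr1.
set t := 2 * pi / M%:R.
have t_gt0 : 0 < t by rewrite divr_gt0 // mulr_gt0 // pi_gt0.
have t_le_pi : t <= pi.
  by rewrite ler_pdivrMr // mulrC ler_pM2l ?pi_gt0 // (ler_nat R 2 M).
apply/eqP => -[cos_t1 _]; move: (t_gt0); rewrite lt_neqAle => /andP[/eqP[]].
apply: (@cos_inj R); rewrite ?cos0 // in_itv /= ?lexx ?pi_ge0 //.
by rewrite t_le_pi ltW.
Qed.

End RootsOfUnity.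

Section Divergence.
Variable R : realType.

Lemma expR_divr_cvg0 (T : Type) (F : set_system T) {FF : Filter F}
    (q : T -> R) (s : R) :
  0 < s -> q x @[x --> F] --> +oo -> expR (- q x / s) @[x --> F] --> 0.
Proof.
move=> s_gt0 q_oo.
have qs_oo : q x / s @[x --> F] --> +oo.
  apply/cvgryPge => A; move/cvgryPge : q_oo => /(_ (A * s)).
  by apply: filterS => x; rewrite ler_pdivlMr.
under eq_fun do rewrite mulNr.
exact: cvg_comp qs_oo (@cvgr_expR R).
Qed.

Lemma cabs2_scale_subr_cvgy (e y : cplx R) :
  e != 0 -> cabs2 (n%:R *: e - y) @[n --> \oo] --> +oo.
Proof.
move=> e_neq0; have e_gt0 : 0 < cabs2 e.
  by rewrite lt_neqAle eq_sym cabs2_eq0 e_neq0 cabs2_ge0.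
apply/cvgryPge => A.
have /cvgryPge/(_ ((A + cabs2 y) * 2 / cabs2 e)) := @cvgr_idn R.
apply: filterS => n; rewrite ler_pdivrMr // => n_large.
have n_le_sqr : n%:R <= n%:R ^+ 2 :> R.
  by rewrite -natrX ler_nat; case: n {n_large} => // n; exact: leq_pmulr.
have := cabs2_subr_ge (n%:R *: e) y; rewrite cabs2_scale; nra.
Qed.

End Divergence.

Section Integrals.
Context d (T : measurableType d) (R : realType).

Lemma integral_cvg0_bounded (mu : {finite_measure set T -> \bar R})
    (f_ : nat -> T -> R) (C : R) :
  (forall n, measurable_fun setT (f_ n)) -> (forall n x, 0 <= f_ n x <= C) ->
  (forall x, f_ n x @[n --> \oo] --> 0) ->
  (\int[mu]_x (f_ n x)%:E @[n --> \oo] --> 0)%E.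
Proof.
move=> mf f_bnd f_cvg0.
have [|||||_ _] := @dominated_convergence _ _ R mu setT measurableT
  (fun n x => (f_ n x)%:E) (cst 0) (cst C%:E).
- by move=> n; apply/measurable_EFinP.
- exact: measurable_cst.
- by apply: aeW => x _; apply/fine_cvgP; split; [exact: nearW | exact: f_cvg0].
- exact: finite_measure_integrable_cst.
- apply: aeW => x n _ /=; have /andP[f_ge0 f_leC] := f_bnd n x.
  by rewrite lee_fin ger0_norm.
by rewrite integral0.
Qed.

Lemma integral_neq0 (mu : {measure set T -> \bar R}) (f : T -> R) :
  mu setT != 0 -> measurable_fun setT f -> (forall x, 0 < f x) ->
  (\int[mu]_x (f x)%:E != 0)%E.
Proof.
move=> mu_neq0 mf f_gt0; apply/eqP => int0.
have mEf := (@measurable_EFinP _ _ _ _ f).2 mf.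
have : (\int[mu]_x `|(f x)%:E| = 0)%E.
  by rewrite -int0; apply: eq_integral => x _; rewrite gee0_abs // lee_fin ltW.
move=> /(ae_eq_integral_abs mu measurableT mEf) [N [mN muN0 f0N]].
move/eqP: mu_neq0; apply; apply: (subset_measure0 _ _ _ muN0) => // x _.
by apply: f0N => /(_ I) /eqP; rewrite eqe gt_eqF.
Qed.

End Integrals.

Section Kernel.
Variables (R : realType) (sigma2 : R) (M : nat).
Local Notation W := (W_SP sigma2 M).

Lemma W_SP_subr r s x : W r s x = W (r - s) 0 x.
Proof. by rewrite /W_SP /csub /= !subr0. Qed.

Hypothesis M_gt0 : (0 < M)%N.

Lemma W_SP_rot u x : W (cmul (cunit_root R M 1) u) 0 x = W u 0 x.
Proof.
pose f v n := (pi * sigma2)^-1 *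
  expR (- cabs2 (csub (csub v 0) (cmul x (cunit_root R M n))) / sigma2).
rewrite /W_SP; congr (_ * _).
change (\sum_(i < M) f (cmul (cunit_root R M 1) u) i = \sum_(i < M) f u i).
rewrite -big_ord_shift; last by rewrite /f cunit_rootnn // cunit_root0.
apply: eq_bigr => i _; rewrite /f (cunit_rootS _ M i) cmulCA !csubE !subr0 -cmulBr.
by rewrite cabs2_cmul cabs2_cexpi mul1r.
Qed.

Hypothesis sigma2_gt0 : 0 < sigma2.

Let c_gt0 : 0 < (pi * sigma2)^-1.
Proof. by rewrite invr_gt0 mulr_gt0 // pi_gt0. Qed.

Let summand_bounds (z : cplx R) :
  0 < (pi * sigma2)^-1 * expR (- cabs2 z / sigma2) <= (pi * sigma2)^-1.
Proof.
rewrite mulr_gt0 ?expR_gt0 //= ler_piMr ?(ltW c_gt0) // expR_le1 mulNr oppr_le0.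
by rewrite divr_ge0 ?cabs2_ge0 // ltW.
Qed.

Lemma W_SP_gt0 r s x : 0 < W r s x.
Proof.
rewrite /W_SP mulr_gt0 ?invr_gt0 ?ltr0n // (bigD1 (Ordinal M_gt0)) //=.
have /andP[+ _] := summand_bounds (csub (csub r s) (cmul x (cunit_root R M 0))).
have : 0 <= \sum_(i < M | i != Ordinal M_gt0) (pi * sigma2)^-1 *
    expR (- cabs2 (csub (csub r s) (cmul x (cunit_root R M i))) / sigma2).
  by apply: sumr_ge0 => i _; have /andP[/ltW] := summand_bounds
    (csub (csub r s) (cmul x (cunit_root R M i))).
rewrite /cunit_root; lra.
Qed.

Lemma W_SP_le r s x : W r s x <= (pi * sigma2)^-1.
Proof.
have M_neq0 : M%:R != 0 :> R by rewrite pnatr_eq0 -lt0n.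
rewrite /W_SP -[leRHS](mulKf M_neq0) ler_wpM2l ?invr_ge0 ?ler0n //.
rewrite [leRHS]mulr_natl.
have -> : (pi * sigma2)^-1 *+ M = \sum_(i < M) (pi * sigma2)^-1.
  by rewrite sumr_const card_ord.
apply: ler_sum => i _.
by have /andP[_] := summand_bounds
  (csub (csub r s) (cmul x (cunit_root R M i))).
Qed.

Lemma W_SP_cvg0 (e x : cplx R) :
  e != 0 -> W (n%:R *: e) 0 x @[n --> \oo] --> 0.
Proof.
move=> e_neq0; rewrite /W_SP -[X in _ --> X](mulr0 M%:R^-1).
apply: cvgMl_tmp.
have sum0 : \sum_(i < M) (0 : R) = 0 by rewrite big1.
rewrite -[X in _ --> X]sum0.
apply: (@cvg_big _ _ +%R) => [|i _]; first exact: add_continuous.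
rewrite -[X in _ --> X](mulr0 (pi * sigma2)^-1).
apply: cvgMl_tmp.
apply: expR_divr_cvg0 => //; under eq_fun do rewrite !csubE subr0.
exact: cabs2_scale_subr_cvgy.
Qed.

Lemma measurable_W_SP u : measurable_fun setT (W u 0).
Proof.
rewrite /W_SP; apply: measurable_funM => //; apply: measurable_sum => i.
apply: measurable_funM => //; apply: measurableT_comp; first exact: measurable_expR.
apply: measurable_funM => //; apply: measurable_funN.
rewrite /cabs2 /csub /cmul /=.
apply: measurable_funD; apply: measurable_funX; apply: measurable_funB => //.
- by apply: measurable_funB; apply: measurable_funM.
- by apply: measurable_funD; apply: measurable_funM.
Qed.

Definition W_SP_mix (P : probability (cplx R) R) (u : cplx R) : \bar R :=
  (\int[P]_x (W u 0 x)%:E)%E.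

Lemma W_SP_mix_rot P u : W_SP_mix P (cmul (cunit_root R M 1) u) = W_SP_mix P u.
Proof. by apply: eq_integral => x _; rewrite W_SP_rot. Qed.

Lemma W_SP_mix_neq0 P u : W_SP_mix P u != 0%E.
Proof.
apply: integral_neq0; last by move=> x; rewrite W_SP_gt0.
- by rewrite -[X in X != _]/(P setT) probability_setT oner_neq0.
- exact: measurable_W_SP.
Qed.

Lemma W_SP_mix_cvg0 P e : e != 0 -> W_SP_mix P (n%:R *: e) @[n --> \oo] --> 0%E.
Proof.
move=> e_neq0; apply: (@integral_cvg0_bounded _ _ _ _ _ ((pi * sigma2)^-1)).
- by move=> n; exact: measurable_W_SP.
- by move=> n x; rewrite ltW ?W_SP_gt0 ?W_SP_le.
- by move=> x; exact: W_SP_cvg0.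
Qed.

End Kernel.

Section Periodicity.
Context {R : realType} {U : Type}.

Lemma rot_shift_periodic (g0 g1 : cplx R -> U) (rho rho' d : cplx R) :
  cmul rho rho' = cone ->
  (forall u, g0 (cmul rho u) = g0 u) -> (forall u, g1 (cmul rho u) = g1 u) ->
  (forall u, g1 u = g0 (u + d)) ->
  forall w, g1 (w + (cmul rho d - d)) = g1 w.
Proof.
move=> rho_inv g0_rot g1_rot g1_shift w; pose v := cmul rho' w.
have rho_v : cmul rho v = w by rewrite /v cmulA rho_inv cmul1.
have -> : w + (cmul rho d - d) = cmul rho (v + d) - d.
  by rewrite cmulDr rho_v addrA.
by rewrite g1_shift subrK g0_rot -g1_shift -[in RHS]rho_v g1_rot.
Qed.

Lemma periodic_scale_nat (g : cplx R -> U) (e : cplx R) :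
  (forall w, g (w + e) = g w) -> forall n : nat, g (n%:R *: e) = g 0.
Proof.
move=> g_per; elim=> [|n IHn]; first by rewrite scale0r.
by rewrite -natr1 scalerDl scale1r g_per.
Qed.

End Periodicity.

Lemma symmetrizes_W_SP_mix (R : realType) (Phi : set (cplx R)) (sigma2 : R)
    (M : nat) (F : cplx R -> probability (cplx R) R) (s0 s1 : cplx R) :
  symmetrizes Phi (W_SP sigma2 M) F -> Phi s0 -> Phi s1 ->
  forall u, W_SP_mix sigma2 M (F s1) u = W_SP_mix sigma2 M (F s0) (u + (s0 - s1)).
Proof.
move=> symF Phi_s0 Phi_s1 u.
transitivity (\int[F s1]_x (W_SP sigma2 M (u + s0) s0 x)%:E)%E.
  by apply: eq_integral => x _; rewrite [in RHS]W_SP_subr addrK.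
by rewrite symF //; apply: eq_integral => x _; rewrite [in LHS]W_SP_subr addrA.
Qed.

Lemma W_SP_not_symmetrizable (R : realType) (Phi : set (cplx R))
    (s0 s1 : cplx R) (sigma2 : R) (M : nat) :
  Phi s0 -> Phi s1 -> s0 <> s1 -> 0 < sigma2 -> (2 <= M)%N ->
  ~ symmetrizable Phi (W_SP sigma2 M).
Proof.
move=> Phi_s0 Phi_s1 s0_neq_s1 sigma2_gt0 M_ge2 [F symF].
have M_gt0 : (0 < M)%N by exact: leq_trans M_ge2.
pose rho := cunit_root R M 1.
have rho_inv : cmul rho (cunit_root R M M.-1) = cone.
  by rewrite -cunit_rootS prednK // cunit_rootnn.
set e := cmul rho (s0 - s1) - (s0 - s1).
have e_neq0 : e != 0.
  rewrite /e -[X in _ - X](cmul1 (s0 - s1)) -cmulBl.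
  by rewrite cmul_neq0 // subr_eq0 ?cunit_root1_neq1 //; apply/eqP.
pose G t := W_SP_mix sigma2 M (F t).
have G_per := periodic_scale_nat (rot_shift_periodic rho_inv
  (W_SP_mix_rot _ M_gt0 _) (W_SP_mix_rot _ M_gt0 _)
  (symmetrizes_W_SP_mix symF Phi_s0 Phi_s1)).
have G_const : (fun n : nat => G s1 (n%:R *: e)) = fun=> G s1 0.
  by apply/funext => n; exact: G_per.
have := W_SP_mix_cvg0 M_gt0 sigma2_gt0 (F s1) e_neq0.
rewrite -/(G s1) G_const => /cvg_lim; rewrite lim_cst //.
move=> G0; have := W_SP_mix_neq0 M_gt0 sigma2_gt0 (F s1) 0.
by rewrite -/(G s1) G0 ?eqxx.
Qed.

Theorem theorem2 (R : realType) (Phi : set (cplx R)) (s0 s1 : cplx R)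
  (hs0 : Phi s0) (hs1 : Phi s1) (hne : s0 <> s1)
  (sigma2 : R) (hsigma : 0 < sigma2)
  (M : nat) (hM : (2 <= M)%N) (hpow : exists k : nat, M = (2 ^ k)%N) :
  (~ exists F : cplx R -> probability (cplx R) R,
       symmetrizes Phi (W_SP sigma2 M) F)
  /\ ~ l_symmetrizable Phi (W_SP sigma2 M).
Proof.
have not_sym := W_SP_not_symmetrizable hs0 hs1 hne hsigma hM.
by split=> // -[F [symF _]]; apply: not_sym; exists F.
Qed.
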